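(* Consider the repeated service game described in the context, with $t>0$, $\tau\in(0,t)$, $c>0$, $d\in(0,1)$, $w\in(0,1)$, and a strictly decreasing utility $\Gamma:[0,1]\to(0,\infty)$. Suppose the price $p$ satisfies $$p=\Gamma(d)\left(1-\frac{\tau}{t}\right)+\frac{c}{1-d}\,\frac{\tau}{t}.$$ Then the cooperation conditions hold if and only if $$w\ \ge\ \frac{c}{(1-d)\Gamma(d)}.$$
   Context: A service provider (SP) and a client interact in rounds of duration $t>0$. The parameters are: trial time $\tau$, SP cost per unit time $c$, price per unit time $p$, channel outage probability $d$, continuation probability (cooperation willingness) $w$, and a client utility function $\Gamma$. When both players use COOP, the long-term payoffs are $$\Pi_s^{\mathrm C}=\frac{(1-d)(p-c)t-dc\tau}{1-(1-d)w},\qquad \Pi_c^{\mathrm C}=\frac{(1-d)(\Gamma(d)-p)t+d\Gamma(d)\tau}{1-(1-d)w}.$$ For an integer $j\ge 2$, the long-term payoff of a player using the defect-and-recover-after-$j$-rounds strategy JDEF$_j$ against COOP is: - for the SP, $$\Pi_s^{(j)}=\frac{(1-d)\big(pt-c\tau-w^{j-1}c(t-\tau)\big)-dc\tau}{1-(1-d)w^{j}};$$ - for the client, $$\Pi_c^{(j)}=\frac{(1-d)\big(\Gamma(d)\tau+w^{j-1}(\Gamma(d)(t-\tau)-pt)\big)+d\Gamma(d)\tau}{1-(1-d)w^{j}}.$$ The cooperation conditions hold when both of the following hold: - $\Pi_s^{\mathrm C}\ge\Pi_s^{(j)}$ for all integers $j\ge2$; - $\Pi_c^{\mathrm C}\ge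 \Pi_c^{(j)}$ for all integers $j\ge 2$. *)

From Stdlib Require Import Reals.
Open Scope R_scope.

(* Long-term payoffs when both players use COOP. *)
Definition Pi_s_C (t c p d w : R) (tau : R) : R :=
  ((1 - d) * (p - c) * t - d * c * tau) / (1 - (1 - d) * w).

Definition Pi_c_C (t p d w tau : R) (Gamma : R -> R) : R :=
  ((1 - d) * (Gamma d - p) * t + d * Gamma d * tau) / (1 - (1 - d) * w).

(* Long-term payoffs of JDEF_j against COOP (j >= 2). *)
Definition Pi_s_J (j : nat) (t c p d w tau : R) : R :=
  ((1 - d) * (p * t - c * tau - w ^ (j - 1) * c * (t - tau)) - d * c * tau)
  / (1 - (1 - d) * w ^ j).

Definition Pi_c_J (j : nat) (t p d w tau : R) (Gamma : R -> R) : R :=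
  ((1 - d) * (Gamma d * tau + w ^ (j - 1) * (Gamma d * (t - tau) - p * t))
     + d * Gamma d * tau)
  / (1 - (1 - d) * w ^ j).

Definition cooperation_conditions (t tau c p d w : R) (Gamma : R -> R) : Prop :=
  (forall j : nat, (2 <= j)%nat -> Pi_s_C t c p d w tau >= Pi_s_J j t c p d w tau) /\
  (forall j : nat, (2 <= j)%nat -> Pi_c_C t p d w tau Gamma >= Pi_c_J j t p d w tau Gamma).

(** The given price is exactly the one with
    [(1 - d) p t = (1 - d) Gamma(d) (t - tau) + c tau].  Substituting this, every
    payoff against COOP collapses to [K (Gamma(d) - x c) / (1 - (1 - d) w x)],
    with [K = (1 - d) (t - tau)] for the SP and [K = tau] for the client, where
    [x = 1] for COOP and [x = w^(j-1)] for JDEF_j.  The payoff at [x = 1] minus the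
    payoff at [x < 1] is a positive multiple of [w - c / ((1 - d) Gamma(d))], so
    every one of the cooperation conditions is equivalent to the threshold on [w]. *)

From Stdlib Require Import Reals Lra Lia Psatz.
Open Scope R_scope.

Definition reduced_payoff (K G c a w x : R) : R :=
  K * (G - x * c) / (1 - a * (w * x)).

Lemma reduced_payoff_ge_iff (K G c a w x : R) :
  0 < K -> 0 < G -> 0 < a < 1 -> 0 < w < 1 -> 0 <= x < 1 ->
  reduced_payoff K G c a w 1 >= reduced_payoff K G c a w x <-> w >= c / (a * G).
Proof.
  intros HK HG Ha Hw Hx; unfold reduced_payoff.
  assert (Hden1 : 0 < 1 - a * (w * 1)) by nra.
  assert (Hden2 : 0 < 1 - a * (w * x)) by nra.
  set (q := K * (1 - x) * (a * G) / ((1 - a * (w * 1)) * (1 - a * (w * x)))).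
  assert (Hq : 0 < q)
    by (unfold q; apply Rdiv_lt_0_compat; repeat apply Rmult_lt_0_compat; lra).
  assert (Hdiff : K * (G - 1 * c) / (1 - a * (w * 1)) - K * (G - x * c) / (1 - a * (w * x))
                  = q * (w - c / (a * G))) by (unfold q; field; repeat split; nra).
  split; intro H.
  - assert (0 <= q * (w - c / (a * G))) by lra. nra.
  - assert (0 <= q * (w - c / (a * G))) by nra. lra.
Qed.

Lemma price_revenue_identity (t tau c d p G : R) :
  t <> 0 -> d <> 1 -> p = G * (1 - tau / t) + c / (1 - d) * (tau / t) ->
  (1 - d) * p * t = (1 - d) * G * (t - tau) + c * tau.
Proof. intros Ht Hd ->. field. lra. Qed.

Section RevenueBalancedPrice.

Variables (t tau c d w p : R) (Gamma : R -> R).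
Hypothesis hprice : (1 - d) * p * t = (1 - d) * Gamma d * (t - tau) + c * tau.

Lemma Pi_s_C_reduced :
  Pi_s_C t c p d w tau = reduced_payoff ((1 - d) * (t - tau)) (Gamma d) c (1 - d) w 1.
Proof.
  unfold Pi_s_C, reduced_payoff; rewrite Rmult_1_r.
  f_equal; lra.
Qed.

Lemma Pi_s_J_reduced (k : nat) :
  Pi_s_J (S k) t c p d w tau
  = reduced_payoff ((1 - d) * (t - tau)) (Gamma d) c (1 - d) w (w ^ k).
Proof.
  unfold Pi_s_J, reduced_payoff; simpl pow; rewrite Nat.sub_0_r.
  f_equal; lra.
Qed.

Lemma Pi_c_C_reduced :
  Pi_c_C t p d w tau Gamma = reduced_payoff tau (Gamma d) c (1 - d) w 1.
Proof.
  unfold Pi_c_C, reduced_payoff; rewrite Rmult_1_r.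
  f_equal; lra.
Qed.

Lemma Pi_c_J_reduced (k : nat) :
  Pi_c_J (S k) t p d w tau Gamma = reduced_payoff tau (Gamma d) c (1 - d) w (w ^ k).
Proof.
  unfold Pi_c_J, reduced_payoff; simpl pow; rewrite Nat.sub_0_r.
  f_equal.
  transitivity (Gamma d * tau - w ^ k * ((1 - d) * p * t - (1 - d) * Gamma d * (t - tau)));
    [ring | rewrite hprice; ring].
Qed.

Hypotheses (htau : 0 < tau < t) (hd : 0 < d < 1) (hw : 0 < w < 1) (hG : 0 < Gamma d).

Lemma Pi_s_C_ge_J_iff (j : nat) : (2 <= j)%nat ->
  Pi_s_C t c p d w tau >= Pi_s_J j t c p d w tau <-> w >= c / ((1 - d) * Gamma d).
Proof.
  intro Hj; destruct j as [|k]; [lia|].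
  rewrite Pi_s_C_reduced, Pi_s_J_reduced.
  apply reduced_payoff_ge_iff; try nra.
  apply pow_lt_1_compat; [lra | lia].
Qed.

Lemma Pi_c_C_ge_J_iff (j : nat) : (2 <= j)%nat ->
  Pi_c_C t p d w tau Gamma >= Pi_c_J j t p d w tau Gamma <-> w >= c / ((1 - d) * Gamma d).
Proof.
  intro Hj; destruct j as [|k]; [lia|].
  rewrite Pi_c_C_reduced, Pi_c_J_reduced.
  apply reduced_payoff_ge_iff; try lra.
  apply pow_lt_1_compat; [lra | lia].
Qed.

Lemma cooperation_conditions_iff :
  cooperation_conditions t tau c p d w Gamma <-> w >= c / ((1 - d) * Gamma d).
Proof.
  unfold cooperation_conditions; split.
  - intros [Hs _]. apply (Pi_s_C_ge_J_iff 2); auto.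
  - intro H; split; intros j Hj.
    + apply (Pi_s_C_ge_J_iff j Hj), H.
    + apply (Pi_c_C_ge_J_iff j Hj), H.
Qed.

End RevenueBalancedPrice.

Theorem corollary4 (t tau c d w p : R) (Gamma : R -> R)
  (ht : 0 < t) (htau : 0 < tau < t) (hc : 0 < c)
  (hd : 0 < d < 1) (hw : 0 < w < 1)
  (hGpos : forall x, 0 <= x <= 1 -> 0 < Gamma x)
  (hGdec : forall x y, 0 <= x <= 1 -> 0 <= y <= 1 -> x < y -> Gamma y < Gamma x)
  (hp : p = Gamma d * (1 - tau / t) + c / (1 - d) * (tau / t)) :
  cooperation_conditions t tau c p d w Gamma <->
  w >= c / ((1 - d) * Gamma d).
Proof.
  apply cooperation_conditions_iff; try assumption.
  - apply price_revenue_identity; [lra | lra | exact hp].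
  - apply hGpos; lra.
Qed.
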